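(* Consider $\tau=t$ on Minkowski space $\mathbb{M}^{n+1}=(\mathbb{R}\times\mathbb{R}^n,-dt^2+(dx^1)^2+\dots+(dx^n)^2)$, and write $p=(t_p,p_S)$ with $p_S\in\mathbb{R}^n$. Then: (1) $\hat{d}_t$ is a definite, translation invariant metric on $\mathbb{M}^{n+1}$, with $\hat{d}_t(p,q)=|t(q)-t(p)|$ if $q\in J^+(p)\cup J^-(p)$, and $\hat{d}_t(p,q)=\|q_S-p_S\|$ if $q\notin J^+(p)\cup J^-(p)$, where $\|\cdot\|$ is the Euclidean norm; (2) for all $p,q$: $p\le q \iff \hat{d}_t(p,q)=t(q)-t(p)$; (3) the $\hat{d}_t$-spheres are coordinate cylinders; for example, the null distance sphere of radius $r$ about the origin is $\{(t,x):\max\{|t|,\|x\|\}=r\}$.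
   Context: Minkowski space is time-oriented by $\partial_t$. Piecewise smooth curves are future (past) causal if all tangents, including one-sided ones, are future (past) pointing causal vectors; constant curves count as causal. $J^+(p)$ ($J^-(p)$) is the set of points reachable from $p$ by a future (past) causal curve, and $p\le q$ means $q\in J^+(p)$. For a function $\tau$ strictly increasing along future causal curves, a piecewise causal curve $\beta:[a,b]\to M$ has a partition $a=s_0<\dots<s_k=b$ with each restriction a smooth future or past causal curve; its null length is $\hat{L}_\tau(\beta)=\sum_i|\tau(\beta(s_i))-\tau(\beta(s_{i-1}))|$, and $\hat{d}_\tau(p,q)=\inf\{\hat{L}_\tau(\beta):\beta$ piecewise causal from $p$ to $q\}$. *)

From HB Require Import structures.
From mathcomp Require Import all_boot all_order all_algebra.
From mathcomp Require Import all_classical all_reals all_analysis.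
Set Implicit Arguments. Unset Strict Implicit. Unset Printing Implicit Defensive.
Import Order.TTheory GRing.Theory Num.Theory.
Local Open Scope classical_set_scope.
Local Open Scope ring_scope.

Section Minkowski.
Variables (R : realType) (n : nat).

Definition pt := (R * 'rV[R]_n)%type.
Definition tcoord (p : pt) : R := p.1.
Definition scoord (p : pt) : 'rV[R]_n := p.2.

(* Euclidean norm on R^n (not the max norm of the library). *)
Definition eucl_norm (v : 'rV[R]_n) : R := Num.sqrt (\sum_(i < n) v 0 i ^+ 2).

Definition padd (p q : pt) : pt := (p.1 + q.1, p.2 + q.2).

Definition mink (v : pt) : R := - v.1 ^+ 2 + \sum_(i < n) v.2 0 i ^+ 2.

(* causal vector: nonzero with g(v,v) <= 0; future (past) pointing w.r.t. d_t:
   g(v, d_t) = - v.1 < 0 (> 0). *)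
Definition causal_vec (v : pt) : Prop := mink v <= 0 /\ v <> (0, 0).
Definition future_causal_vec (v : pt) : Prop := causal_vec v /\ 0 < v.1.
Definition past_causal_vec (v : pt) : Prop := causal_vec v /\ v.1 < 0.

Definition smooth_fun (f : R -> R) : Prop :=
  forall (k : nat) (x : R), derivable (derive1n k f) x 1.
Definition tcomp (g : R -> pt) : R -> R := fun s => (g s).1.
Definition scomp (g : R -> pt) (i : 'I_n) : R -> R := fun s => (g s).2 0 i.
Definition smooth_curve (g : R -> pt) : Prop :=
  smooth_fun (tcomp g) /\ forall i, smooth_fun (scomp g i).
Definition tangent (g : R -> pt) (s : R) : pt :=
  (derive1 (tcomp g) s, \row_(i < n) derive1 (scomp g i) s).

Definition const_on (beta : R -> pt) (a b : R) : Prop :=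
  forall s, a <= s <= b -> beta s = beta a.

(* beta restricted to [a,b] is smooth (restriction of a smooth curve on R, so
   tangents at a and b are the one-sided tangents) and all its tangents satisfy P *)
Definition smooth_with_tangents (P : pt -> Prop) (beta : R -> pt) (a b : R) : Prop :=
  exists g : R -> pt, smooth_curve g /\ (forall s, a <= s <= b -> g s = beta s) /\
    (forall s, a <= s <= b -> P (tangent g s)).

Definition smooth_future_causal (beta : R -> pt) (a b : R) : Prop :=
  const_on beta a b \/ smooth_with_tangents future_causal_vec beta a b.
Definition smooth_past_causal (beta : R -> pt) (a b : R) : Prop :=
  const_on beta a b \/ smooth_with_tangents past_causal_vec beta a b.

Definition partition (a b : R) (k : nat) (s : nat -> R) : Prop :=
  s 0%N = a /\ s k = b /\ forall i : nat, (i < k)%N -> s i < s i.+1.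

Definition future_causal_curve (beta : R -> pt) (a b : R) : Prop :=
  a <= b /\ (const_on beta a b \/
    exists k s, partition a b k s /\ forall i : nat, (i < k)%N ->
      smooth_with_tangents future_causal_vec beta (s i) (s i.+1)).
Definition past_causal_curve (beta : R -> pt) (a b : R) : Prop :=
  a <= b /\ (const_on beta a b \/
    exists k s, partition a b k s /\ forall i : nat, (i < k)%N ->
      smooth_with_tangents past_causal_vec beta (s i) (s i.+1)).

Definition Jplus (p q : pt) : Prop :=
  exists (beta : R -> pt) (a b : R), future_causal_curve beta a b /\ beta a = p /\ beta b = q.
Definition Jminus (p q : pt) : Prop :=
  exists (beta : R -> pt) (a b : R), past_causal_curve beta a b /\ beta a = p /\ beta b = q.

Definition causal_le (p q : pt) : Prop := Jplus p q.

Definition piecewise_causal (beta : R -> pt) (a b : R) (k : nat) (s : nat -> R) : Prop :=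
  partition a b k s /\ forall i : nat, (i < k)%N ->
    smooth_future_causal beta (s i) (s i.+1) \/ smooth_past_causal beta (s i) (s i.+1).

Definition null_length (beta : R -> pt) (k : nat) (s : nat -> R) : R :=
  \sum_(i < k) `|tcoord (beta (s i.+1)) - tcoord (beta (s i))|.

Definition nulldist (p q : pt) : R :=
  inf [set L : R | exists (beta : R -> pt) (a b : R) (k : nat) (s : nat -> R),
         piecewise_causal beta a b k s /\ beta a = p /\ beta b = q /\
         L = null_length beta k s].

End Minkowski.

From Pilot Require Import Defs.
From HB Require Import structures.
From mathcomp Require Import all_boot all_order all_algebra.
From mathcomp Require Import all_classical all_reals all_analysis.
From mathcomp Require Import ring lra.
Set Implicit Arguments. Unset Strict Implicit. Unset Printing Implicit Defensive.
Import Order.TTheory GRing.Theory Num.Theory.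
Local Open Scope classical_set_scope.
Local Open Scope ring_scope.

(* Along a causal segment the spatial velocity is dominated by the time
   velocity, so for every unit vector u the function u.x - t (future) or
   u.x + t (past) is nonincreasing.  Summing over the segments, every piecewise
   causal curve from p to q has null length at least max(|dt|, ||dx||), where
   (dt, dx) = q - p, and a future causal curve has ||dx|| <= dt.  Conversely
   (dt, dx) splits into two causal vectors whose time components have absolute
   values adding up to max(|dt|, ||dx||), and the broken line along them
   attains the bound.  Hence d_t(p, q) = max(|dt|, ||dx||), and all three
   statements are properties of this cylindrical distance. *)

Section EuclideanSpace.
Variables (R : realType) (n : nat).
Implicit Types (u v w : 'rV[R]_n) (c : R).

Definition dot u w : R := \sum_(i < n) u 0 i * w 0 i.
Definition sqnorm w : R := \sum_(i < n) w 0 i ^+ 2.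

Lemma sqnorm_ge0 w : 0 <= sqnorm w.
Proof. by apply: sumr_ge0 => i _; rewrite sqr_ge0. Qed.

Lemma sqnorm_eq0 w : sqnorm w = 0 -> w = 0.
Proof.
move=> /eqP; rewrite psumr_eq0 => [/allP w0|i _]; last by rewrite sqr_ge0.
apply/rowP => i; rewrite mxE; apply/eqP.
by rewrite -sqrf_eq0; apply: (implyP (w0 i (mem_index_enum i))).
Qed.

Lemma sqnorm0 : sqnorm 0 = 0.
Proof. by rewrite /sqnorm big1 // => i _; rewrite mxE expr0n. Qed.

Lemma sqnormN w : sqnorm (- w) = sqnorm w.
Proof. by apply: eq_bigr => i _; rewrite mxE sqrrN. Qed.

Lemma sqnormZ c w : sqnorm (c *: w) = c ^+ 2 * sqnorm w.
Proof. by rewrite /sqnorm mulr_sumr; apply: eq_bigr => i _; rewrite mxE exprMn. Qed.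

Lemma sqnormD u w : sqnorm (u + w) = sqnorm u + 2 * dot u w + sqnorm w.
Proof.
rewrite /sqnorm /dot mulr_sumr -!big_split /=.
by apply: eq_bigr => i _; rewrite mxE; ring.
Qed.

Lemma dotmm w : dot w w = sqnorm w.
Proof. by apply: eq_bigr => i _; rewrite expr2. Qed.

Lemma dot0l w : dot 0 w = 0.
Proof. by rewrite /dot big1 // => i _; rewrite mxE mul0r. Qed.

Lemma dot0r u : dot u 0 = 0.
Proof. by rewrite /dot big1 // => i _; rewrite mxE mulr0. Qed.

Lemma dotZl c u w : dot (c *: u) w = c * dot u w.
Proof. by rewrite /dot mulr_sumr; apply: eq_bigr => i _; rewrite mxE mulrA. Qed.

Lemma dotBr u v w : dot u (v - w) = dot u v - dot u w.
Proof. by rewrite /dot -sumrB; apply: eq_bigr => i _; rewrite !mxE mulrBr. Qed.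

Lemma cauchy_schwarz u w : dot u w ^+ 2 <= sqnorm u * sqnorm w.
Proof.
have [/sqnorm_eq0 ->|w0] := eqVneq (sqnorm w) 0.
  by rewrite dot0r sqnorm0 expr0n mulr0.
have wpos : 0 < sqnorm w by rewrite lt_def w0 sqnorm_ge0.
have expand (A B : R) : \sum_(i < n) (A * u 0 i - B * w 0 i) ^+ 2 =
    A ^+ 2 * sqnorm u - 2 * A * B * dot u w + B ^+ 2 * sqnorm w.
  rewrite /sqnorm /dot !mulr_sumr -sumrB -big_split /=.
  by apply: eq_bigr => i _; ring.
have : 0 <= \sum_(i < n) (sqnorm w * u 0 i - dot u w * w 0 i) ^+ 2.
  by apply: sumr_ge0 => i _; rewrite sqr_ge0.
have -> : \sum_(i < n) (sqnorm w * u 0 i - dot u w * w 0 i) ^+ 2 =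
    sqnorm w * (sqnorm u * sqnorm w - dot u w ^+ 2) by rewrite expand; ring.
by rewrite pmulr_rge0 // subr_ge0.
Qed.

Lemma eucl_norm_ge0 w : 0 <= eucl_norm w.
Proof. exact: sqrtr_ge0. Qed.

Lemma eucl_norm_sqr w : eucl_norm w ^+ 2 = sqnorm w.
Proof. by rewrite sqr_sqrtr // sqnorm_ge0. Qed.

Lemma eucl_norm0 : eucl_norm (0 : 'rV[R]_n) = 0.
Proof. by rewrite /eucl_norm -/(sqnorm 0) sqnorm0 sqrtr0. Qed.

Lemma eucl_norm_eq0 w : eucl_norm w = 0 -> w = 0.
Proof. by move=> w0; apply: sqnorm_eq0; rewrite -eucl_norm_sqr w0 expr0n. Qed.

Lemma eucl_normN w : eucl_norm (- w) = eucl_norm w.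
Proof. by rewrite /eucl_norm -!/(sqnorm _) sqnormN. Qed.

Lemma ler_dot_eucl_norm u w : `|dot u w| <= eucl_norm u * eucl_norm w.
Proof.
rewrite -ler_sqr ?nnegrE ?mulr_ge0 ?eucl_norm_ge0 //.
by rewrite real_normK ?num_real // exprMn !eucl_norm_sqr cauchy_schwarz.
Qed.

Lemma ler_eucl_normD u w : eucl_norm (u + w) <= eucl_norm u + eucl_norm w.
Proof.
rewrite -ler_sqr ?nnegrE ?addr_ge0 ?eucl_norm_ge0 //.
rewrite eucl_norm_sqr sqnormD sqrrD !eucl_norm_sqr.
have := le_trans (ler_norm _) (ler_dot_eucl_norm u w); lra.
Qed.

Lemma sqnorm_normalize w : eucl_norm w != 0 -> sqnorm ((eucl_norm w)^-1 *: w) = 1.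
Proof. by move=> w0; rewrite sqnormZ -eucl_norm_sqr exprVn mulVf ?expf_neq0. Qed.

Lemma eucl_norm_le_dual w c :
  (forall u, sqnorm u <= 1 -> dot u w <= c) -> eucl_norm w <= c.
Proof.
move=> H; have [w0|w0] := eqVneq (eucl_norm w) 0.
  by rewrite w0 -(dot0l w) H // sqnorm0.
have := H ((eucl_norm w)^-1 *: w); rewrite sqnorm_normalize // lexx => /(_ isT).
by rewrite dotZl dotmm -eucl_norm_sqr expr2 mulrA mulVf ?mul1r.
Qed.

End EuclideanSpace.

Section AffineFunctions.
Variable R : realType.

Lemma is_derive_affine (al be s0 x : R) :
  is_derive x 1 (fun s : R => al + (s - s0) * be) be.
Proof.
have -> : (fun s : R => al + (s - s0) * be) = cst al + be \*: (id - cst s0).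
  by apply: funext => s /=; rewrite mulrC.
by apply: is_derive_eq; rewrite subr0 add0r scaler1.
Qed.

Lemma derive1_affine (al be s0 x : R) :
  derive1 (fun s : R => al + (s - s0) * be) x = be.
Proof. by rewrite derive1E (@derive_val _ _ _ _ _ _ _ (is_derive_affine _ _ _ _)). Qed.

Lemma smooth_affine (al be s0 : R) : smooth_fun (fun s : R => al + (s - s0) * be).
Proof.
have affine_derive k : exists al' be' : R,
    derive1n k (fun s : R => al + (s - s0) * be) = (fun s => al' + (s - s0) * be').
  elim: k => [|k [al' [be' IH]]]; first by exists al, be.
  exists be', 0; rewrite derive1nS IH; apply: funext => x.
  by rewrite derive1_affine mulr0 addr0.
move=> k x; have [al' [be' ->]] := affine_derive k.
by case: (is_derive_affine al' be' s0 x).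
Qed.

End AffineFunctions.

Section Minkowski.
Variables (R : realType) (n : nat).
Implicit Types (p q v w : pt R n) (u : 'rV[R]_n).

Definition cyldist p q : R := Num.max `|q.1 - p.1| (eucl_norm (q.2 - p.2)).

Definition pdiff p q : pt R n := (q.1 - p.1, q.2 - p.2).

Lemma padd_pdiff p q : padd p (pdiff p q) = q.
Proof. by rewrite /padd /= !(addrC p.1) !(addrC p.2) !subrK; case: q. Qed.

Lemma mink_le0E v : (mink v <= 0) = (eucl_norm v.2 <= `|v.1|).
Proof.
rewrite /mink -/(sqnorm v.2) -eucl_norm_sqr -real_normK ?num_real //.
by rewrite addrC subr_le0 ler_pXn2r ?nnegrE ?normr_ge0 ?eucl_norm_ge0.
Qed.

Lemma mink_le0_dot v u : mink v <= 0 -> sqnorm u <= 1 -> `|dot u v.2| <= `|v.1|.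
Proof.
rewrite mink_le0E => vc u1; apply: le_trans (ler_dot_eucl_norm _ _) _.
have : eucl_norm u <= 1 by rewrite -(sqrtr1 R) ler_sqrt.
by have := eucl_norm_ge0 v.2; have := eucl_norm_ge0 u; nra.
Qed.

Lemma mink_le0_eq0 v : mink v <= 0 -> v.1 = 0 -> v = (0, 0).
Proof.
rewrite mink_le0E => vc v1; have := eucl_norm_ge0 v.2.
rewrite v1 normr0 in vc => v2; have /eucl_norm_eq0 : eucl_norm v.2 = 0 by lra.
by case: v {vc v2} v1 => a b /= -> ->.
Qed.

Lemma increment_le_of_tangent (g : R -> pt R n) (a b c : R) u :
  smooth_curve g -> a <= b ->
  (forall s, a <= s <= b -> dot u (tangent g s).2 <= c * (tangent g s).1) ->
  dot u ((g b).2 - (g a).2) <= c * ((g b).1 - (g a).1).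
Proof.
move=> [st ss] ab H.
pose f := \sum_(i < n) (u 0 i \*: scomp g i) - c \*: tcomp g.
have fE s : f s = dot u (g s).2 - c * (g s).1 by rewrite /f /= fct_sumE.
have f' (x : R) : is_derive x 1 f (dot u (tangent g x).2 - c * (tangent g x).1).
  apply: is_derive_eq.
    apply: is_deriveB; last by apply: is_deriveZ; exact/derivableP/(st 0%N).
    by apply: is_derive_sum => i; apply: is_deriveZ; exact/derivableP/(ss i 0%N).
  rewrite /dot /tangent /= -derive1E; congr (_ - _).
  by apply: eq_bigr => i _; rewrite mxE -derive1E.
have : f b <= f a.
  apply: (ler0_derive1_le_cc (a := a) (b := b)); rewrite ?in_itv /= ?lexx ?ab //.
  - move=> x; rewrite in_itv /= => /andP[ax xb].
    by rewrite derive1E derive_val subr_le0 H ?ltW ?ax.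
  - by apply: derivable_within_continuous => x _; case: (f' x).
rewrite !fE dotBr mulrBr; lra.
Qed.

Lemma future_segment_increment (beta : R -> pt R n) a b u :
  a <= b -> sqnorm u <= 1 -> smooth_with_tangents (@future_causal_vec R n) beta a b ->
  dot u ((beta b).2 - (beta a).2) <= (beta b).1 - (beta a).1.
Proof.
move=> ab u1 [g [sg [eg tg]]]; rewrite -!eg ?lexx ?ab //.
rewrite -[leRHS]mul1r; apply: increment_le_of_tangent => // s sab.
have [[vc _] pos] := tg s sab.
by rewrite mul1r (le_trans (ler_norm _)) // (le_trans (mink_le0_dot vc u1)) ?gtr0_norm.
Qed.

Lemma past_segment_increment (beta : R -> pt R n) a b u :
  a <= b -> sqnorm u <= 1 -> smooth_with_tangents (@past_causal_vec R n) beta a b ->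
  dot u ((beta b).2 - (beta a).2) <= (beta a).1 - (beta b).1.
Proof.
move=> ab u1 [g [sg [eg tg]]]; rewrite -!eg ?lexx ?ab // -[leRHS]opprB -mulN1r.
apply: increment_le_of_tangent => // s sab.
have [[vc _] neg] := tg s sab.
by rewrite mulN1r (le_trans (ler_norm _)) // (le_trans (mink_le0_dot vc u1)) ?ltr0_norm.
Qed.

Lemma causal_segment_increment (beta : R -> pt R n) a b u :
  a <= b -> sqnorm u <= 1 ->
  smooth_future_causal beta a b \/ smooth_past_causal beta a b ->
  dot u ((beta b).2 - (beta a).2) <= `|(beta b).1 - (beta a).1|.
Proof.
move=> ab u1 [[c|f]|[c|f]].
- by rewrite c ?lexx ?ab // !subrr normr0 dot0r.
- exact: le_trans (future_segment_increment ab u1 f) (ler_norm _).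
- by rewrite c ?lexx ?ab // !subrr normr0 dot0r.
- by rewrite distrC (le_trans (past_segment_increment ab u1 f)) ?ler_norm.
Qed.

Lemma partition_increment_le (a b : R) k (s : nat -> R) (f : R -> R) (G : nat -> R) :
  Defs.partition a b k s -> (forall i, (i < k)%N -> f (s i.+1) - f (s i) <= G i) ->
  f b - f a <= \sum_(i < k) G i.
Proof.
move=> [<- [<- _]] H; rewrite -(telescope_sumr (fun i => f (s i)) (leq0n k)) big_mkord.
by apply: ler_sum => i _; apply: H.
Qed.

Lemma partition_nonincreasing (a b : R) k (s : nat -> R) (f : R -> R) :
  Defs.partition a b k s -> (forall i, (i < k)%N -> f (s i.+1) <= f (s i)) ->
  f b <= f a.
Proof.
move=> ps H; have := partition_increment_le (f := f) (G := fun=> 0) ps.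
rewrite big1 // subr_le0; apply=> i ik; rewrite subr_le0; exact: H.
Qed.

Lemma future_causal_curve_spatial (beta : R -> pt R n) a b :
  future_causal_curve beta a b ->
  eucl_norm ((beta b).2 - (beta a).2) <= (beta b).1 - (beta a).1.
Proof.
move=> [ab segs]; apply: eucl_norm_le_dual => u u1; rewrite dotBr.
suff : dot u (beta b).2 - (beta b).1 <= dot u (beta a).2 - (beta a).1 by lra.
case: segs => [c|[k [s [ps segs]]]]; first by rewrite c ?lexx ?ab.
have sinc := ps.2.2.
apply: (partition_nonincreasing (f := fun x => dot u (beta x).2 - (beta x).1)) ps _.
move=> i ik; have := future_segment_increment (ltW (sinc i ik)) u1 (segs i ik).
rewrite dotBr; lra.
Qed.

Lemma past_causal_curve_spatial (beta : R -> pt R n) a b :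
  past_causal_curve beta a b ->
  eucl_norm ((beta b).2 - (beta a).2) <= (beta a).1 - (beta b).1.
Proof.
move=> [ab segs]; apply: eucl_norm_le_dual => u u1; rewrite dotBr.
suff : dot u (beta b).2 + (beta b).1 <= dot u (beta a).2 + (beta a).1 by lra.
case: segs => [c|[k [s [ps segs]]]]; first by rewrite c ?lexx ?ab.
have sinc := ps.2.2.
apply: (partition_nonincreasing (f := fun x => dot u (beta x).2 + (beta x).1)) ps _.
move=> i ik; have := past_segment_increment (ltW (sinc i ik)) u1 (segs i ik).
rewrite dotBr; lra.
Qed.

Lemma cyldist_le_null_length (beta : R -> pt R n) a b k s :
  piecewise_causal beta a b k s -> cyldist (beta a) (beta b) <= null_length beta k s.
Proof.
move=> [ps segs]; have sinc := ps.2.2.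
have up : (beta b).1 - (beta a).1 <= null_length beta k s :=
  partition_increment_le (f := fun x => (beta x).1) ps (fun i _ => ler_norm _).
have down : - (beta b).1 - - (beta a).1 <= null_length beta k s.
  apply: (partition_increment_le (f := fun x => - (beta x).1)
    (G := fun i => `|tcoord (beta (s i.+1)) - tcoord (beta (s i))|)) ps _ => i _.
  by rewrite -opprD -normrN ler_norm.
rewrite /cyldist ge_max ler_norml -andbA; apply/and3P; split; [lra|lra|].
apply: eucl_norm_le_dual => u u1; rewrite dotBr.
apply: (partition_increment_le (f := fun x => dot u (beta x).2)
  (G := fun i => `|tcoord (beta (s i.+1)) - tcoord (beta (s i))|)) ps _ => i ik.
by rewrite -dotBr; apply: causal_segment_increment (ltW (sinc i ik)) u1 (segs i ik).
Qed.

Lemma future_causal_vecP v : mink v <= 0 -> 0 < v.1 -> future_causal_vec v.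
Proof. by move=> vc v1; split=> //; split=> // v0; rewrite v0 ltxx in v1. Qed.

Lemma past_causal_vecP v : mink v <= 0 -> v.1 < 0 -> past_causal_vec v.
Proof. by move=> vc v1; split=> //; split=> // v0; rewrite v0 ltxx in v1. Qed.

Lemma paddA p v w : padd (padd p v) w = padd p (padd v w).
Proof. by rewrite /padd /= !addrA. Qed.

Definition line p v (s0 : R) : R -> pt R n :=
  fun s => (p.1 + (s - s0) * v.1, p.2 + (s - s0) *: v.2).

Lemma scomp_line p v s0 i :
  scomp (line p v s0) i = fun s => p.2 0 i + (s - s0) * v.2 0 i.
Proof. by apply: funext => s; rewrite /scomp /line /= !mxE. Qed.

Lemma smooth_line p v s0 : smooth_curve (line p v s0).
Proof. by split=> [|i]; rewrite ?scomp_line; apply: smooth_affine. Qed.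

Lemma tangent_line p v s0 s : tangent (line p v s0) s = v.
Proof.
rewrite /tangent derive1_affine.
have -> : \row_i derive1 (scomp (line p v s0) i) s = v.2.
  by apply/rowP => i; rewrite mxE scomp_line derive1_affine.
by case: v.
Qed.

Lemma line_start p v s0 : line p v s0 s0 = p.
Proof. by rewrite /line subrr mul0r scale0r !addr0; case: p. Qed.

Lemma line_step p v s0 s : s = s0 + 1 -> line p v s0 s = padd p v.
Proof. by move=> ->; rewrite /line (addrC s0) addrK mul1r scale1r. Qed.

Lemma line_const p s0 s : line p (0, 0) s0 s = p.
Proof. by rewrite /line /= mulr0 scaler0 !addr0; case: p. Qed.

Lemma line_with_tangents (P : pt R n -> Prop) (beta : R -> pt R n) p v s0 a b :
  P v -> (forall s, a <= s <= b -> beta s = line p v s0 s) ->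
  smooth_with_tangents P beta a b.
Proof.
move=> Pv eq_beta; exists (line p v s0); split; first exact: smooth_line.
by split=> s hs; rewrite ?eq_beta ?tangent_line.
Qed.

Lemma line_causal_segment (beta : R -> pt R n) p v s0 a b :
  a <= b -> mink v <= 0 -> (forall s, a <= s <= b -> beta s = line p v s0 s) ->
  smooth_future_causal beta a b \/ smooth_past_causal beta a b.
Proof.
move=> ab vc eq_beta; case: (ltrgtP v.1 0) => v1.
- by right; right; apply: line_with_tangents eq_beta; apply: past_causal_vecP.
- by left; right; apply: line_with_tangents eq_beta; apply: future_causal_vecP.
- left; left => s hs.
  by rewrite !eq_beta ?lexx ?ab ?hs // (mink_le0_eq0 vc v1) !line_const.
Qed.

Lemma partition_nat k : Defs.partition 0 k%:R k (fun i => i%:R : R).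
Proof. by split; [|split] => // i _; rewrite ltr_nat. Qed.

Lemma line_future_causal_curve p v :
  mink v <= 0 -> 0 <= v.1 -> future_causal_curve (line p v 0) 0 1.
Proof.
move=> vc v1; split; first exact: ler01.
have [v0|vpos] := eqVneq v.1 0.
  by left => s _; rewrite (mink_le0_eq0 vc v0) !line_const.
right; exists 1%N, (fun i => i%:R); split; first exact: partition_nat.
case=> // _; apply: line_with_tangents (fun s _ => erefl).
by apply: future_causal_vecP; rewrite // lt_def vpos.
Qed.

Lemma line_past_causal_curve p v :
  mink v <= 0 -> v.1 <= 0 -> past_causal_curve (line p v 0) 0 1.
Proof.
move=> vc v1; split; first exact: ler01.
have [v0|vneg] := eqVneq v.1 0.
  by left => s _; rewrite (mink_le0_eq0 vc v0) !line_const.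
right; exists 1%N, (fun i => i%:R); split; first exact: partition_nat.
case=> // _; apply: line_with_tangents (fun s _ => erefl).
by apply: past_causal_vecP; rewrite // lt_neqAle vneg.
Qed.

Lemma JplusP p q : Jplus p q <-> eucl_norm (q.2 - p.2) <= q.1 - p.1.
Proof.
split=> [[beta [a [b [fc [<- <-]]]]]|spatial]; first exact: future_causal_curve_spatial.
have vc : mink (pdiff p q) <= 0 by rewrite mink_le0E (le_trans spatial) ?ler_norm.
exists (line p (pdiff p q) 0), 0, 1; split.
  by apply: line_future_causal_curve vc (le_trans (eucl_norm_ge0 _) spatial).
by rewrite line_start line_step ?add0r // padd_pdiff.
Qed.

Lemma JminusP p q : Jminus p q <-> eucl_norm (q.2 - p.2) <= p.1 - q.1.
Proof.
split=> [[beta [a [b [pc [<- <-]]]]]|spatial]; first exact: past_causal_curve_spatial.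
have vc : mink (pdiff p q) <= 0.
  by rewrite mink_le0E (le_trans spatial) // distrC ler_norm.
exists (line p (pdiff p q) 0), 0, 1; split.
  apply: line_past_causal_curve vc _.
  by rewrite /= subr_le0 -subr_ge0 (le_trans (eucl_norm_ge0 _) spatial).
by rewrite line_start line_step ?add0r // padd_pdiff.
Qed.

Definition zigzag p v w : R -> pt R n :=
  fun s => if s <= 1 then line p v 0 s else line (padd p v) w 1 s.

Lemma zigzag_piecewise_causal p v w : mink v <= 0 -> mink w <= 0 ->
  piecewise_causal (zigzag p v w) 0 2 2 (fun i => i%:R).
Proof.
move=> vc wc; split; first exact: partition_nat.
case=> [|[|//]] _.
- by apply: line_causal_segment ler01 vc _ => s /andP[_ s1]; rewrite /zigzag s1.
- apply: line_causal_segment wc _; first by rewrite ler_nat.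
  move=> s /andP[s1 _]; rewrite /zigzag; case: ifP => // s1'.
  have -> : s = 1 by apply/eqP; rewrite eq_le s1 s1'.
  by rewrite line_start line_step ?add0r.
Qed.

Lemma zigzag0 p v w : zigzag p v w 0 = p.
Proof. by rewrite /zigzag ler01 line_start. Qed.

Lemma zigzag1 p v w : zigzag p v w 1 = padd p v.
Proof. by rewrite /zigzag lexx line_step ?add0r. Qed.

Lemma zigzag2 p v w : zigzag p v w 2 = padd (padd p v) w.
Proof. by rewrite /zigzag leNgt ltr1n /= line_step //; lra. Qed.

Lemma null_length_zigzag p v w :
  null_length (zigzag p v w) 2 (fun i => i%:R) = `|v.1| + `|w.1|.
Proof.
rewrite /null_length !big_ord_recr big_ord0 /= add0r /tcoord.
rewrite zigzag0 zigzag1 zigzag2 /padd /=.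
by rewrite (addrC (p.1 + v.1)) addKr (addrC (p.1 + v.1 + w.1)) addKr.
Qed.

(* The two pieces are null vectors in the spatial direction of d when d is
   spacelike, and d itself followed by 0 otherwise. *)
Lemma causal_split d : exists v w : pt R n,
  [/\ mink v <= 0, mink w <= 0, padd v w = d &
      `|v.1| + `|w.1| = Num.max `|d.1| (eucl_norm d.2)].
Proof.
have [spatial|timelike] := leP (eucl_norm d.2) `|d.1|.
  exists d, (0, 0); split; rewrite ?mink_le0E ?eucl_norm0 ?normr0 ?addr0 ?max_l //.
  by rewrite /padd !addr0; case: d {spatial}.
set e := eucl_norm d.2; set x := e^-1 *: d.2.
have epos : 0 < e by apply: le_lt_trans timelike.
have x1 : sqnorm x = 1 by apply: sqnorm_normalize; rewrite gt_eqF.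
move: timelike; rewrite ltr_norml => /andP[lo hi].
exists ((e + d.1) / 2, ((e + d.1) / 2) *: x), (- ((e - d.1) / 2), ((e - d.1) / 2) *: x).
split.
- by rewrite /mink /= -/(sqnorm _) sqnormZ x1 mulr1 addNr.
- by rewrite /mink /= -/(sqnorm _) sqnormZ x1 mulr1 sqrrN addNr.
- rewrite /padd /= -scalerDl scalerA.
  have -> : (e + d.1) / 2 + (e - d.1) / 2 = e by field.
  rewrite mulfV ?gt_eqF // scale1r.
  have -> : (e + d.1) / 2 - (e - d.1) / 2 = d.1 by field.
  by case: d {x x1 lo hi e epos}.
- rewrite /= normrN !ger0_norm ?max_r ?divr_ge0 //; first by field.
  + by rewrite subr_ge0 ltW.
  + by rewrite -[e]opprK addrC subr_ge0 ltW.
Qed.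

Lemma cyldist_ge0 p q : 0 <= cyldist p q.
Proof. by rewrite le_max normr_ge0. Qed.

Lemma cyldistxx p : cyldist p p = 0.
Proof. by rewrite /cyldist !subrr normr0 eucl_norm0 maxxx. Qed.

Lemma cyldistC p q : cyldist p q = cyldist q p.
Proof. by rewrite /cyldist distrC -eucl_normN opprB. Qed.

Lemma cyldist_triangle p q r : cyldist p r <= cyldist p q + cyldist q r.
Proof.
have split_t : r.1 - p.1 = (q.1 - p.1) + (r.1 - q.1) by rewrite [RHS]addrC addrA subrK.
have split_x : r.2 - p.2 = (q.2 - p.2) + (r.2 - q.2) by rewrite [RHS]addrC addrA subrK.
rewrite {1}/cyldist split_t split_x ge_max.
apply/andP; split.
  by apply: le_trans (ler_normD _ _) _; apply: lerD; rewrite le_max lexx.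
by apply: le_trans (ler_eucl_normD _ _) _; apply: lerD; rewrite le_max lexx orbT.
Qed.

Lemma cyldist_eq0 p q : cyldist p q = 0 -> p = q.
Proof.
move=> /eqP; rewrite eq_le ge_max cyldist_ge0 andbT => /andP[t0 x0].
have t_eq : q.1 = p.1 by apply/subr0_eq/eqP; rewrite -normr_le0.
have x_eq : q.2 = p.2.
  by apply/subr0_eq/eucl_norm_eq0/eqP; rewrite eq_le x0 eucl_norm_ge0.
by case: p q t_eq x_eq {t0 x0} => ? ? [? ?] /= -> ->.
Qed.

Lemma cyldist_padd p q v : cyldist (padd p v) (padd q v) = cyldist p q.
Proof. by rewrite /cyldist /padd /= !opprD (addrACA q.1) (addrACA q.2) !subrr !addr0. Qed.

Lemma nulldist_cyldist p q : nulldist p q = cyldist p q.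
Proof.
rewrite /nulldist; set S := (X in inf X).
have lb L : S L -> cyldist p q <= L.
  by move=> [beta [a [b [k [s [pc [<- [<- ->]]]]]]]]; apply: cyldist_le_null_length.
have Sc : S (cyldist p q).
  have [v [w [vc wc vw len]]] := causal_split (pdiff p q).
  exists (zigzag p v w), 0, 2, 2%N, (fun i => i%:R).
  split; first exact: zigzag_piecewise_causal.
  by rewrite zigzag0 zigzag2 paddA vw padd_pdiff null_length_zigzag len.
apply/le_anti/andP; split; first by apply: ge_inf Sc; exists (cyldist p q).
by apply: lb_le_inf; [exists (cyldist p q) | exact: lb].
Qed.

Lemma JplusJminusP p q :
  Jplus p q \/ Jminus p q <-> eucl_norm (q.2 - p.2) <= `|q.1 - p.1|.
Proof.
rewrite JplusP JminusP; split=> [[] x_le|].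
- exact: le_trans x_le (ler_norm _).
- by rewrite distrC (le_trans x_le) ?ler_norm.
case: (leP 0 (q.1 - p.1)) => [/ger0_norm|/ltr0_norm] ->; rewrite ?opprB.
- by left.
- by right.
Qed.

Lemma cyldist_time p q : cyldist p q = q.1 - p.1 <-> eucl_norm (q.2 - p.2) <= q.1 - p.1.
Proof.
split=> [<-|x_le]; first by rewrite le_max lexx orbT.
have dt0 : 0 <= q.1 - p.1 by apply: le_trans x_le; apply: eucl_norm_ge0.
by rewrite /cyldist ger0_norm // max_l.
Qed.

End Minkowski.

Theorem proposition3p3 (R : realType) (n : nat) :
  (* (1) definite, translation invariant metric, with explicit formula *)
  ((forall p q : pt R n, 0 <= nulldist p q) /\
   (forall p : pt R n, nulldist p p = 0) /\
   (forall p q : pt R n, nulldist p q = nulldist q p) /\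
   (forall p q r : pt R n, nulldist p r <= nulldist p q + nulldist q r) /\
   (forall p q : pt R n, nulldist p q = 0 -> p = q) /\
   (forall p q v : pt R n, nulldist (padd p v) (padd q v) = nulldist p q) /\
   (forall p q : pt R n, Jplus p q \/ Jminus p q ->
      nulldist p q = `|tcoord q - tcoord p|) /\
   (forall p q : pt R n, ~ (Jplus p q \/ Jminus p q) ->
      nulldist p q = eucl_norm (scoord q - scoord p))) /\
  (* (2) *)
  (forall p q : pt R n, causal_le p q <-> nulldist p q = tcoord q - tcoord p) /\
  (* (3) spheres are coordinate cylinders *)
  (forall (p : pt R n) (r : R),
     [set q | nulldist p q = r] =
     [set q | Num.max `|tcoord q - tcoord p| (eucl_norm (scoord q - scoord p)) = r]).
Proof.
have dE := @nulldist_cyldist R n.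
split; [do 7?split|split].
- by move=> p q; rewrite dE cyldist_ge0.
- by move=> p; rewrite dE cyldistxx.
- by move=> p q; rewrite !dE cyldistC.
- by move=> p q r; rewrite !dE cyldist_triangle.
- by move=> p q; rewrite dE => /cyldist_eq0.
- by move=> p q v; rewrite !dE cyldist_padd.
- by move=> p q /JplusJminusP x_le; rewrite dE /cyldist max_l.
- move=> p q /JplusJminusP/negP; rewrite -ltNge => x_gt.
  by rewrite dE /cyldist max_r ?ltW.
- by move=> p q; rewrite /causal_le JplusP dE cyldist_time.
- by move=> p r; apply/funext => q; rewrite /= dE.
Qed.
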